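(* For $0\le r\le n$ and $0\le s\le\min(r,n-r)$, $\mathrm{tr}(\Lambda_s^{r,r})=\binom{n}{r}$, and the orthogonal projection $P_s^r$ of $L^2(X)$ onto $L^2(X_r)_s$ is $$P_s^r=\frac{\binom{n}{s}-\binom{n}{s-1}}{\binom{n}{r}}\,\Lambda_s^{r,r}.$$
   Context: Let $\Omega$ be a finite set with $|\Omega|=n\ge1$, $G=S(\Omega)$, $X=\mathcal P(\Omega)$, $X_r=\{x\in X:|x|=r\}$, $G$ acting on $L^2(X)$ (complex functions on $X$ with standard inner product; $L^2(X_r)$ = functions supported on $X_r$) by $(\rho(g)\psi)(x)=\psi(g^{-1}x)$. For $0\le s\le\min(r,n-r)$, $L^2(X_r)_s$ is the unique irreducible $G$-subspace of $L^2(X_r)$ isomorphic to the irreducible representation associated with the partition $(n-s,s)$. For $0\le s\le\min(r_1,n-r_1,r_2,n-r_2)$, $\Lambda_s^{r_1,r_2}$ is a $G$-equivariant map $L^2(X)\to L^2(X)$ sending $L^2(X_{r_1})_s$ into $L^2(X_{r_2})_s$ and vanishing on its orthogonal complement, with kernel $\lambda$ defined on integers $\max(0,r_2-r_1)\le k\le\min(n-r_1,r_2)$ by $(\Lambda_s^{r_1,r_2}\psi)(x_2)=\sum_{x_1\in X_{r_1}}\lambda(|x_2\setminus x_1|)\psi(x_1)$. The kernel agrees on its domain with a unique polynomial of degree $s$ which is nonzero at $0$; $\Lambda_s^{r_1,r_2}$ is normalized so that this polynomial takes the value $1$ at $t=0$. Convention $\binom{n}{-1}=0$. *)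

From HB Require Import structures.
From mathcomp Require Import all_boot all_order all_algebra all_fingroup all_field.
Set Implicit Arguments. Unset Strict Implicit. Unset Printing Implicit Defensive.
Import Order.TTheory GRing.Theory Num.Theory.
Local Open Scope ring_scope.

(* Omega = 'I_n, X = P(Omega) = {set 'I_n}, L^2(X) = complex functions on X.
   Complex numbers: algC (algebraic closure of Q with conjugation). *)
Definition L2 (n : nat) := {ffun {set 'I_n} -> algC^o}.

Definition dotL2 n (f g : L2 n) : algC := \sum_(x : {set 'I_n}) f x * (g x)^*.

Definition rho n (g : {perm 'I_n}) (f : L2 n) : L2 n :=
  [ffun x : {set 'I_n} => f ((g^-1)%g @: x)].

Definition deltaL2 n (x : {set 'I_n}) : L2 n := [ffun y => (y == x)%:R].

Definition traceL2 n (L : L2 n -> L2 n) : algC :=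
  \sum_(x : {set 'I_n}) L (deltaL2 x) x.

Definition supported_on n (r : nat) (f : L2 n) := forall x : {set 'I_n}, #|x| != r -> f x = 0.

Definition G_invariant n (W : {vspace L2 n}) :=
  forall (g : {perm 'I_n}) (f : L2 n), f \in W -> rho g f \in W.

Definition subchar n (W : {vspace L2 n}) (g : {perm 'I_n}) : algC :=
  \sum_(i < \dim W) coord (vbasis W) i (rho g (tnth (vbasis W) i)).

(* number of k-subsets of Omega fixed by g (permutation character of M^(n-k,k)) *)
Definition fixcount n (k : nat) (g : {perm 'I_n}) : nat :=
  #|[set x : {set 'I_n} | (#|x| == k) && (g @: x == x)]|.

(* character of the irreducible representation of S_n associated to the
   partition (n-s, s), s <= n/2:  chi_(n-s,s) = chi_{M^(n-s,s)} - chi_{M^(n-s+1,s-1)}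
   (Young's rule), with the convention that the second term is 0 for s = 0. *)
Definition chi_irr n (s : nat) (g : {perm 'I_n}) : algC :=
  (fixcount s g)%:R - (if s is s'.+1 then fixcount s' g else 0)%:R.

(* binomial coefficient with convention binom(n, -1) = 0: this is binom(n, s-1) *)
Definition binom_pred (n s : nat) : nat := if s is s'.+1 then 'C(n, s') else 0.

(* W is L^2(X_r)_s: a G-subspace of L^2(X_r) isomorphic to the irreducible
   representation associated with (n-s, s) (isomorphism of complex
   representations of a finite group <=> equality of characters). *)
Definition is_L2_component n (r s : nat) (W : {vspace L2 n}) :=
  [/\ forall f, f \in W -> supported_on r f,
      G_invariant W &
      forall g, subchar W g = chi_irr s g].

Definition is_Lambda n (r s : nat) (W : {vspace L2 n}) (p : {poly algC})
  (L : L2 n -> L2 n) :=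
  [/\ (forall (a : algC) (u v : L2 n), L (a *: u + v) = a *: L u + L v)
      /\ (forall g f, L (rho g f) = rho g (L f)),
      forall f, f \in W -> L f \in W,
      forall f, (forall h, h \in W -> dotL2 f h = 0) -> L f = 0,
      size p = s.+1 /\ p.[0] = 1 &
      forall (f : L2 n) (x2 : {set 'I_n}), #|x2| = r ->
        L f x2 = \sum_(x1 : {set 'I_n} | #|x1| == r) p.[(#|x2 :\: x1|)%:R] * f x1].

From HB Require Import structures.
From mathcomp Require Import all_boot all_order all_algebra all_fingroup all_field all_character.
From mathcomp Require Import zify ring.
Set Implicit Arguments. Unset Strict Implicit. Unset Printing Implicit Defensive.
Import Order.TTheory GRing.Theory Num.Theory Num.Def.

(* W := L^2(X_r)_s is irreducible: by Young's rule its character is the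
   difference of the permutation characters of S_n on s- and (s-1)-subsets,
   and since the S_n-orbits on pairs of subsets of sizes a and b are classified
   by the size of the intersection, Burnside's lemma gives
   sum_g fix_a(g) fix_b(g) = (min(a, b) + 1) n!, whence the character has norm 1.
   By Schur's lemma the equivariant map Lambda, which preserves W and kills its
   orthogonal complement, is therefore mu times the orthogonal projection onto W.
   Its trace is sum_(x in X_r) p(0) = binom(n, r) by the kernel formula, and
   mu dim W = mu (binom(n, s) - binom(n, s - 1)) by Schur, so 1/mu = c. *)

Lemma perm_of_fibres (T K : finType) (f h : T -> K) :
  (forall k, #|[pred x | f x == k]| = #|[pred x | h x == k]|) ->
  exists s : {perm T}, forall x, h (s x) = f x.
Proof.
move=> fibres.
have count_fibre (g : T -> K) k : count_mem k (codom g) = #|[pred x | g x == k]|.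
  by rewrite count_map enumT -size_filter cardE.
have /tuple_permP[p Ep] : perm_eq (codom f) (map_tuple h (enum_tuple T)).
  by apply/allP => k _; rewrite /= !count_fibre fibres.
have sP : injective (fun x => enum_val (p (enum_rank x))).
  by move=> x y /enum_val_inj /perm_inj /enum_rank_inj.
exists (perm sP) => x; rewrite permE.
have := congr1 (fun s => nth (f x) s (enum_rank x)) Ep.
rewrite nth_codom enum_rankK /= (nth_map (enum_rank x)) ?size_enum_ord //.
by rewrite nth_ord_enum tnth_map (tnth_nth x) -enum_val_nth.
Qed.

Section SubsetPairs.
Variable T : finType.
Implicit Types (A B : {set T}) (p q : {set T} * {set T}).

Lemma exists_subset_card A k : k <= #|A| -> exists2 B : {set T}, B \subset A & #|B| = k.
Proof.
move=> le_kA; exists [set x in take k (enum A)].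
  by apply/subsetP => x; rewrite inE => /mem_take; rewrite mem_enum.
by rewrite cardsE (card_uniqP _) ?take_uniq ?enum_uniq // size_takel // -cardE.
Qed.

Definition subset_pairs a b := setX [set A : {set T} | #|A| == a] [set B : {set T} | #|B| == b].

Lemma exists_subset_pair a b i : a + b <= #|T| -> i <= minn a b ->
  exists2 p : {set T} * {set T}, p \in subset_pairs a b & #|p.1 :&: p.2| = i.
Proof.
move=> le_abT; rewrite leq_min => /andP[le_ia le_ib].
have [A _ cardA] := @exists_subset_card setT a ltac:(rewrite cardsT; lia).
have [I sIA cardI] := @exists_subset_card A i ltac:(by rewrite cardA).
have [J sJA' cardJ] := @exists_subset_card (~: A) (b - i) ltac:(have := cardsC A; lia).
have AJ0 : A :&: J = set0 by apply/eqP; rewrite -subset0 -(setICr A) setIS.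
have IJ0 : I :&: J = set0 by apply/eqP; rewrite -subset0 -AJ0 setSI.
exists (A, I :|: J); rewrite ?inE /= ?cardsU ?IJ0 ?cards0 ?cardA ?cardI ?cardJ ?eqxx /=.
  by apply/eqP; lia.
by rewrite setIUr AJ0 setU0 (setIidPr sIA).
Qed.

Lemma card_block A B u v :
  #|[pred x | (x \in A, x \in B) == (u, v)]| =
  if u then (if v then #|A :&: B| else #|A| - #|A :&: B|)
  else (if v then #|B| - #|A :&: B| else #|T| - (#|A| + #|B| - #|A :&: B|)).
Proof.
have /eq_card -> : [pred x | (x \in A, x \in B) == (u, v)] =i
    (if u then (if v then A :&: B else A :\: B) else (if v then B :\: A else ~: (A :|: B))).
  by move=> x; rewrite !inE xpair_eqE; case: u; case: v; rewrite !inE;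
     case: (x \in A); case: (x \in B).
case: u; case: v => //; rewrite ?cardsD ?[B :&: A]setIC //.
by have := cardsC (A :|: B); have := cardsUI A B; lia.
Qed.

Definition pair_imset p (g : {perm T}) := (g @: p.1, g @: p.2).

Lemma pair_imset_transitive p q :
  #|p.1| = #|q.1| -> #|p.2| = #|q.2| -> #|p.1 :&: p.2| = #|q.1 :&: q.2| ->
  exists g, pair_imset p g = q.
Proof.
move=> eq1 eq2 eq12.
have [g gE] := @perm_of_fibres _ _ (fun x => (x \in p.1, x \in p.2))
  (fun x => (x \in q.1, x \in q.2)) ltac:(by case=> u v; rewrite !card_block eq1 eq2 eq12).
have imset_block (A B : {set T}) : (forall x, (g x \in B) = (x \in A)) -> g @: A = B.
  move=> AB; apply/setP => y; rewrite -[y](permKV g) mem_imset ?AB //; exact: perm_inj.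
exists g; rewrite /pair_imset (imset_block p.1 q.1) ?(imset_block p.2 q.2)
  -?surjective_pairing // => x; by case: (gE x).
Qed.

Lemma pair_imset1 : pair_imset^~ 1%g =1 id.
Proof. by case=> A B; rewrite /pair_imset /= !(eq_imset _ (@perm1 T)) !imset_id. Qed.

Lemma pair_imsetM p : act_morph pair_imset p.
Proof.
by move=> g h; rewrite /pair_imset /= -!imset_comp; congr pair; apply: eq_imset => x; rewrite permM.
Qed.

Definition pair_action := TotalAction pair_imset1 pair_imsetM.

Local Notation G := [set: {perm T}].

Lemma acts_subset_pairs a b : [acts G, on subset_pairs a b | pair_action].
Proof.
apply/actsP => g _ [A B]; rewrite !inE /= !card_imset //; exact: perm_inj.
Qed.

Lemma card_overlap_pair_imset p g :
  #|(pair_imset p g).1 :&: (pair_imset p g).2| = #|p.1 :&: p.2|.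
Proof. by rewrite /= -imsetI ?card_imset // => [|? ? _ _]; exact: perm_inj. Qed.

Lemma eq_orbit_subset_pairs a b p q : p \in subset_pairs a b -> q \in subset_pairs a b ->
  (orbit pair_action G p == orbit pair_action G q) = (#|p.1 :&: p.2| == #|q.1 :&: q.2|).
Proof.
rewrite !inE => /andP[/eqP p1 /eqP p2] /andP[/eqP q1 /eqP q2].
rewrite orbit_eq_mem; apply/idP/eqP => [/orbitP[g _ <-] | eq12].
  exact: card_overlap_pair_imset.
have [g <-] := @pair_imset_transitive q p ltac:(by rewrite p1 q1)
  ltac:(by rewrite p2 q2) (esym eq12).
exact: mem_orbit.
Qed.

Lemma card_orbits_subset_pairs a b : a + b <= #|T| ->
  #|orbit pair_action G @: subset_pairs a b| = (minn a b).+1.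
Proof.
move=> le_abT; pose S := subset_pairs a b.
have rep_spec (i : 'I_(minn a b).+1) : {p | p \in S & #|p.1 :&: p.2| == i}.
  apply: sig2W; have [|p Sp <-] := @exists_subset_pair a b i le_abT; last by exists p.
  by rewrite -ltnS.
pose rep i := s2val (rep_spec i).
have repS i : rep i \in S := s2valP (rep_spec i).
have rep_overlap i : #|(rep i).1 :&: (rep i).2| = i := eqP (s2valP' (rep_spec i)).
have -> : orbit pair_action G @: S = [set orbit pair_action G (rep i) | i in 'I_(minn a b).+1].
  apply/setP => O; apply/imsetP/imsetP => [[p Sp ->] | [i _ ->]]; last by exists (rep i).
  have le_overlap_min : #|p.1 :&: p.2| < (minn a b).+1.
    move: Sp; rewrite !inE ltnS leq_min => /andP[/eqP <- /eqP <-].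
    by rewrite !subset_leq_card ?subsetIl ?subsetIr.
  exists (inord #|p.1 :&: p.2|) => //; apply/eqP.
  by rewrite (@eq_orbit_subset_pairs a b) // rep_overlap inordK.
rewrite card_imset ?card_ord // => i j /eqP.
by rewrite (@eq_orbit_subset_pairs a b) // !rep_overlap => /eqP /val_inj.
Qed.

Definition fixed_subsets k (g : {perm T}) := [set A : {set T} | (#|A| == k) && (g @: A == A)].

Lemma Fix_subset_pairs a b g :
  ('Fix_(subset_pairs a b | pair_action)[g])%g = setX (fixed_subsets a g) (fixed_subsets b g).
Proof.
apply/setP => -[A B]; rewrite !inE sub1set inE /= /pair_imset xpair_eqE.
by case: (#|A| == a); case: (#|B| == b); case: (_ @: A == A); case: (_ @: B == B).
Qed.

Lemma sum_card_fixed_subsets a b : a + b <= #|T| ->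
  \sum_(g : {perm T}) #|fixed_subsets a g| * #|fixed_subsets b g| =
  (minn a b).+1 * #|{perm T}|.
Proof.
move=> le_abT; rewrite -card_orbits_subset_pairs // -cardsT.
rewrite -(Frobenius_Cauchy (acts_subset_pairs a b)).
by apply: eq_big => [g | g _]; rewrite ?inE // Fix_subset_pairs cardsX.
Qed.
End SubsetPairs.

Local Open Scope ring_scope.

Lemma sum_sqr_chi_irr n s : (s + s <= n)%N ->
  \sum_(g : {perm 'I_n}) `|chi_irr s g| ^+ 2 = #|{perm 'I_n}|%:R.
Proof.
move=> le_2s_n.
have sum_fix a b : (a + b <= n)%N ->
    \sum_(g : {perm 'I_n}) (fixcount a g)%:R * (fixcount b g)%:R =
    ((minn a b).+1 * #|{perm 'I_n}|)%:R :> algC.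
  move=> le_abn; rewrite -sum_card_fixed_subsets ?card_ord // natr_sum.
  by apply: eq_bigr => g _; rewrite natrM.
have chi_sqr g : `|chi_irr s g| ^+ 2 = chi_irr s g * chi_irr s g.
  by rewrite normCK /chi_irr rmorphB /= !conjC_nat.
under eq_bigr do rewrite chi_sqr /chi_irr.
case: s {chi_sqr} le_2s_n => [|s] le_2s_n.
  by under eq_bigr do rewrite /= subr0; rewrite sum_fix // min0n mul1n.
have sqrB (x y : algC) : (x - y) * (x - y) = x * x + y * y - 2%:R * (x * y) by ring.
under eq_bigr do rewrite sqrB.
rewrite sumrB big_split -mulr_sumr /= !sum_fix ?minnn ?(minn_idPr (leqnSn s)) //; try lia.
by rewrite !natrM -[s.+2]addn2 -[s.+1]addn1 !natrD; ring.
Qed.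

Section L2DotProduct.
Variable n : nat.

Fact dotL2_is_bilinear : bilinear_for
  (GRing.Scale.Law.clone _ _ *%R _) (GRing.Scale.Law.clone _ _ (conjC \; *%R) _)
  (@dotL2 n).
Proof.
split=> [u' a u v | u a v w]; rewrite /dotL2 /= [in RHS]mulr_sumr -big_split;
  apply: eq_bigr => x _; rewrite !ffunE ?rmorphD ?rmorphM /= ?mulrDl ?mulrDr.
  by congr (_ + _); exact: esym (mulrA _ _ _).
by congr (_ + _); rewrite mulrCA.
Qed.

HB.instance Definition _ := bilinear_isBilinear.Build _ _ _ _ _ _ (@dotL2 n)
  dotL2_is_bilinear.

Fact dotL2_is_hermitian (f g : L2 n) : dotL2 f g = (-1) ^+ false * (dotL2 g f)^*.
Proof.
rewrite expr0 mul1r /dotL2 rmorph_sum; apply: eq_bigr => x _.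
by rewrite rmorphM /= conjCK mulrC.
Qed.

HB.instance Definition _ :=
  isHermitianSesquilinear.Build _ _ _ _ (@dotL2 n) dotL2_is_hermitian.

Fact dotL2_is_positive (f : L2 n) : f != 0 -> 0 < dotL2 f f.
Proof.
move=> nz_f; have /existsP[x fx_neq0] : [exists x, f x != 0].
  apply: contraNT nz_f => /existsPn f0; apply/eqP/ffunP => x.
  by rewrite ffunE; apply/eqP/negPn.
rewrite /dotL2 (bigD1 x) //= ltr_wpDr ?sumr_ge0 ?mul_conjC_gt0 // => y _.
exact: mul_conjC_ge0.
Qed.

HB.instance Definition _ := isDotProduct.Build _ _ (@dotL2 n) dotL2_is_positive.

Lemma L2_orthogonal_split (W : {vspace L2 n}) (f : L2 n) :
  exists2 w, w \in W & forall h, h \in W -> dotL2 (f - w) h = 0.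
Proof.
have [w Ww [g [-> _ g_perp]]] := sesquilinear.orthogonal_split (@dotL2 n) (vbasis W) f.
exists w; first by rewrite -(span_basis (vbasisP W)).
move=> h Wh; rewrite addrC addKr; apply: (sesquilinear.span_orthogonal g_perp).
  exact/memv_span/mem_head.
by rewrite (span_basis (vbasisP W)).
Qed.
End L2DotProduct.

Fact rho_is_linear n (g : {perm 'I_n}) : linear (rho g).
Proof. by move=> a u v; apply/ffunP => x; rewrite !ffunE. Qed.

HB.instance Definition _ n g := GRing.isLinear.Build algC (L2 n) (L2 n) _ (@rho n g)
  (rho_is_linear g).

Lemma rho1 n (f : L2 n) : rho 1 f = f.
Proof. by apply/ffunP => x; rewrite ffunE invg1 (eq_imset _ (@perm1 _)) imset_id. Qed.

Lemma rhoM n (g h : {perm 'I_n}) (f : L2 n) : rho (g * h) f = rho h (rho g f).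
Proof.
by apply/ffunP => x; rewrite !ffunE invMg (eq_imset _ (permM _ _)) imset_comp.
Qed.

Section RestrictedMatrix.
Variables (n : nat) (W : {vspace L2 n}).
Local Notation e := (vbasis W).

Lemma vbasis_nth_mem (i : 'I_(\dim W)) : e`_i \in W.
Proof. by apply: vbasis_mem; rewrite mem_nth ?size_tuple. Qed.

(* Row i holds the coordinates of A e_i, so that restr_mx reverses composition,
   as MathComp's right-acting matrix representations require. *)
Definition restr_mx (A : L2 n -> L2 n) : 'M[algC]_(\dim W) :=
  \matrix_(i, j) coord e j (A e`_i).

Lemma restr_mx_id : restr_mx id = 1%:M.
Proof.
by apply/matrixP => i j; rewrite !mxE /= (coord_free _ _ (basis_free (vbasisP W))).
Qed.

Lemma eq_restr_mx (A B : L2 n -> L2 n) : A =1 B -> restr_mx A = restr_mx B.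
Proof. by move=> AB; apply/matrixP => i j; rewrite !mxE AB. Qed.

Lemma restr_mx_comp (A : {linear L2 n -> L2 n}) (B : L2 n -> L2 n) :
  (forall w, w \in W -> B w \in W) -> restr_mx (A \o B) = restr_mx B *m restr_mx A.
Proof.
move=> BW; apply/matrixP => i j; rewrite !mxE /=.
rewrite {1}(coord_vbasis (BW _ (vbasis_nth_mem i))) !linear_sum /=.
by apply: eq_bigr => k _; rewrite !linearZ /= !mxE.
Qed.

Lemma restr_mx_scalar (A : {linear L2 n -> L2 n}) mu :
  (forall w, w \in W -> A w \in W) -> restr_mx A = mu%:M ->
  forall w, w \in W -> A w = mu *: w.
Proof.
move=> AW Amu; have Ae (i : 'I_(\dim W)) : A e`_i = mu *: e`_i.
  move/matrixP: Amu => Amu.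
  rewrite {1}(coord_vbasis (AW _ (vbasis_nth_mem i))) (bigD1 i) //= big1 => [|j ne_ji].
    by have := Amu i i; rewrite !mxE eqxx mulr1n => ->; rewrite addr0.
  by have := Amu i j; rewrite !mxE eq_sym (negbTE ne_ji) mulr0n => ->; rewrite scale0r.
move=> w /coord_vbasis ->; rewrite linear_sum scaler_sumr; apply: eq_bigr => i _.
by rewrite linearZ /= Ae !scalerA mulrC.
Qed.
End RestrictedMatrix.

Section IrreducibleComponent.
Variables (n : nat) (W : {vspace L2 n}).
Hypothesis W_inv : G_invariant W.
Hypothesis W_norm :
  \sum_(g : {perm 'I_n}) `|subchar W g| ^+ 2 = #|{perm 'I_n}|%:R.
Local Notation G := [set: {perm 'I_n}]%G.

Lemma restr_rho_repr : mx_repr G (fun g => restr_mx W (rho g)).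
Proof.
split=> [|g h _ _]; first by rewrite (eq_restr_mx W (@rho1 n)) restr_mx_id.
rewrite (eq_restr_mx W (rhoM g h)) -restr_mx_comp //.
by move=> w Ww; apply: W_inv.
Qed.

Local Notation rW := (MxRepresentation restr_rho_repr).

Lemma cfRepr_restr_rho g : cfRepr rW g = subchar W g.
Proof.
rewrite cfunE inE mulr1n /mxtrace /subchar.
by apply: eq_bigr => i _; rewrite mxE (tnth_nth 0).
Qed.

Lemma restr_rho_abs_irr : mx_absolutely_irreducible rW.
Proof.
have cfnorm1 : '[cfRepr rW] = 1.
  rewrite (cfnormE (cfun_onG _)) (eq_bigl predT) => [|g]; last by rewrite inE.
  under eq_bigr do rewrite cfRepr_restr_rho.
  by rewrite W_norm cardsT mulVf // pnatr_eq0 -lt0n; apply/card_gt0P; exists 1%g.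
have /irr_reprP[rH irrH rH_E] : cfRepr rW \in irr G.
  by rewrite irrEchar cfRepr_char cfnorm1 eqxx.
apply: groupC; apply: mx_rsim_irr irrH.
by apply/cfRepr_rsimP; rewrite -rH_E.
Qed.

Lemma equivariant_scalar_on_irreducible (A : {linear L2 n -> L2 n}) :
  (forall g f, A (rho g f) = rho g (A f)) -> (forall w, w \in W -> A w \in W) ->
  exists mu, forall w, w \in W -> A w = mu *: w.
Proof.
move=> A_eqv AW.
have /is_scalar_mxP[mu Amu] : is_scalar_mx (restr_mx W A).
  apply: (mx_abs_irr_cent_scalar restr_rho_abs_irr); apply/centgmxP => g _ /=.
  rewrite -!restr_mx_comp //; last by move=> w Ww; apply: W_inv.
  by apply: eq_restr_mx => f /=; rewrite A_eqv.
by exists mu; apply: restr_mx_scalar.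
Qed.
End IrreducibleComponent.

Section Trace.
Variable n : nat.

Lemma L2_deltaE (f : L2 n) : f = \sum_x f x *: deltaL2 x.
Proof.
apply/ffunP => y; rewrite sum_ffunE (bigD1 y) //= big1 => [|x ne_xy].
  by rewrite !ffunE eqxx addr0; exact: (esym (mulr1 _)).
by rewrite !ffunE eq_sym (negbTE ne_xy); exact: (mulr0 _).
Qed.

Lemma traceL2_scalar_on (W : {vspace L2 n}) (A : {linear L2 n -> L2 n}) mu :
  (forall f, A f \in W) -> (forall w, w \in W -> A w = mu *: w) ->
  traceL2 A = (\dim W)%:R * mu.
Proof.
move=> AW Amu; pose e := vbasis W.
have A_delta x : A (deltaL2 x) x = \sum_i coord e i (A (deltaL2 x)) * e`_i x.
  by rewrite {1}(coord_vbasis (AW _)) sum_ffunE; apply: eq_bigr => i _; rewrite ffunE.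
rewrite /traceL2; under eq_bigr do rewrite A_delta.
rewrite exchange_big /=; transitivity (\sum_(i < \dim W) mu); last first.
  by rewrite sumr_const card_ord mulr_natl.
apply: eq_bigr => i _; transitivity (coord e i (A (\sum_x e`_i x *: deltaL2 x))).
  by rewrite !linear_sum; apply: eq_bigr => x _; rewrite !linearZ /= mulrC.
rewrite -L2_deltaE Amu ?vbasis_nth_mem // linearZ /=.
by rewrite (coord_free _ _ (basis_free (vbasisP W))) eqxx mulr1.
Qed.

Lemma traceL2_kernel r (p : {poly algC}) (A : L2 n -> L2 n) :
  p.[0] = 1 -> (forall f, supported_on r (A f)) ->
  (forall f (x2 : {set 'I_n}), #|x2| = r ->
     A f x2 = \sum_(x1 : {set 'I_n} | #|x1| == r) p.[(#|x2 :\: x1|)%:R] * f x1) ->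
  traceL2 A = 'C(n, r)%:R.
Proof.
move=> p0 A_supp A_ker; rewrite /traceL2 (bigID (fun x : {set 'I_n} => #|x| == r)) /=.
rewrite [X in _ + X]big1 ?addr0 => [|x /A_supp //].
transitivity (\sum_(x : {set 'I_n} | #|x| == r) (1 : algC)).
  apply: eq_bigr => x /eqP rx; rewrite A_ker // (bigD1 x) ?rx //= big1 => [|y /andP[_ ne_yx]].
    by rewrite ffunE eqxx setDv cards0 p0 mulr1 addr0.
  by rewrite ffunE (negbTE ne_yx) mulr0.
rewrite sumr_const -[X in 'C(X, _)]card_ord -card_draws.
by congr _%:R; apply: eq_card => x; rewrite !inE.
Qed.
End Trace.

Lemma L2_component_dim n r s (W : {vspace L2 n}) : is_L2_component r s W ->
  (\dim W)%:R = 'C(n, s)%:R - (binom_pred n s)%:R :> algC.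
Proof.
case=> _ _ W_chi; have <- : subchar W 1 = (\dim W)%:R.
  rewrite /subchar (eq_bigr (fun _ => 1)) ?sumr_const ?card_ord // => i _.
  by rewrite rho1 (tnth_nth 0) (coord_free _ _ (basis_free (vbasisP W))) eqxx.
have fixcount1 k : fixcount k (1 : {perm 'I_n}) = 'C(n, k).
  rewrite /fixcount -[X in 'C(X, _)]card_ord -card_draws; apply: eq_card => x.
  by rewrite !inE (eq_imset _ (@perm1 _)) imset_id eqxx andbT.
by rewrite W_chi /chi_irr /binom_pred; case: s {W_chi} => [|s]; rewrite !fixcount1.
Qed.

Lemma linear_eq_mod_perp n (A : {linear L2 n -> L2 n}) (W : {vspace L2 n}) f w :
  (forall g, (forall h, h \in W -> dotL2 g h = 0) -> A g = 0) ->
  (forall h, h \in W -> dotL2 (f - w) h = 0) -> A f = A w.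
Proof. by move=> A_perp fw_perp; rewrite -[f](subrK w) linearD A_perp ?add0r. Qed.

Unset Implicit Arguments.

Theorem mainTheorem7 (n r s : nat) (W : {vspace L2 n}) (p : {poly algC})
  (L : L2 n -> L2 n) :
  (1 <= n)%N -> (r <= n)%N -> (s <= minn r (n - r))%N ->
  is_L2_component r s W -> is_Lambda r s W p L ->
  traceL2 L = ('C(n, r))%:R /\
  (let c : algC := (('C(n, s))%:R - (binom_pred n s)%:R) / ('C(n, r))%:R in
   forall f : L2 n,
     c *: L f \in W /\
     (forall h, h \in W -> dotL2 (f - c *: L f) h = 0)).
Proof.
move=> _ le_rn le_s_min W_comp [[L_lin L_eqv] LW L_perp [_ p0] L_ker].
pose L' : {linear L2 n -> L2 n} := HB.pack L (GRing.isLinear.Build _ _ _ _ L L_lin).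
have L_proj f : exists2 w, w \in W & (forall h, h \in W -> dotL2 (f - w) h = 0) /\ L f = L w.
  have [w Ww w_perp] := L2_orthogonal_split W f.
  by exists w => //; split => //; apply: (linear_eq_mod_perp (A := L') L_perp).
have LfW f : L f \in W by have [w Ww [_ ->]] := L_proj f; apply: LW.
have [W_supp W_inv W_chi] := W_comp.
have W_norm : \sum_(g : {perm 'I_n}) `|subchar W g| ^+ 2 = #|{perm 'I_n}|%:R.
  under eq_bigr do rewrite W_chi; apply: sum_sqr_chi_irr.
  by move: le_s_min; rewrite leq_min => /andP[]; lia.
have [mu L_mu] := equivariant_scalar_on_irreducible W_inv W_norm (A := L') L_eqv LW.
have trL : traceL2 L = 'C(n, r)%:R.
  by apply: (traceL2_kernel p0) => // f x; apply: W_supp.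
split=> // c f; have [w Ww [w_perp ->]] := L_proj f.
have c_mu : c * mu = 1.
  rewrite /c -(L2_component_dim W_comp) mulrAC -(traceL2_scalar_on (A := L') LfW L_mu) trL.
  by rewrite mulfV // pnatr_eq0 -lt0n bin_gt0.
have Lw : L w = mu *: w := L_mu w Ww.
by rewrite Lw scalerA c_mu scale1r.
Qed.
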